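(* There is an absolute constant $C$ such that for all integers $n,k,d\ge1$, the function $\textsc{Word}_{S_n,k}$ is computed by $S_n^{k-1}$-invariant $\Sigma_{d+1}$ and $\Pi_{d+1}$ formulas of size at most $n^{C\,d\,k^{1/d}}$. In particular, $\textsc{Word}_{S_n,k}$ has $S_n^{k-1}$-invariant $\mathsf{AC}$ formulas of size $n^{O(\log k)}$ and depth $O(\log k)$.
   Context: $\textsc{Word}_{S_n,k}:\overline{S_n}^k\subseteq\{0,1\}^{kn^2}\to\{0,1\}$ maps a $k$-tuple of $n\times n$ permutation matrices to the $(1,1)$-entry of their product; the variables are the entries $M_{i,a,b}$. $S_n^{k-1}$ acts on variables by $(g_1,\dots,g_{k-1})\cdot M_{i,a,b}=M_{i,g_{i-1}(a),g_i(b)}$ with $g_0=g_k=1$. $\mathsf{AC}$ formulas are rooted trees with unordered children. Leaves are labeled $0,1,x_i,\neg x_i$, and gates are unbounded fan-in $\textsc{and}$/$\textsc{or}$. $\Sigma_{d+1}$ (resp. $\Pi_{d+1}$) formulas are those of depth at most $d+1$ with output gate $\textsc{or}$ (resp. $\textsc{and}$). Size is the number of literal leaves. $P$-invariance means invariance of the labeled tree under relabeling literals by every $\pi\in P$. *)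

From HB Require Import structures.
From mathcomp Require Import all_boot all_order all_algebra all_fingroup.
From Stdlib Require Import List Permutation.
From Stdlib Require Reals.

Set Implicit Arguments.
Unset Strict Implicit.
Unset Printing Implicit Defensive.

Inductive gate := GAnd | GOr.

Inductive formula (V : Type) : Type :=
| FConst : bool -> formula V
| FLit : bool -> V -> formula V
| FGate : gate -> list (formula V) -> formula V.

Arguments FConst {V} b.
Arguments FLit {V} b v.
Arguments FGate {V} g l.

Fixpoint eval {V : Type} (x : V -> bool) (F : formula V) : bool :=
  match F with
  | FConst b => b
  | FLit true v => x v
  | FLit false v => ~~ x v
  | FGate GAnd l => (fix ev l := match l with nil => true | G :: l' => eval x G && ev l' end) l
  | FGate GOr l => (fix ev l := match l with nil => false | G :: l' => eval x G || ev l' end) l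
  end.

Fixpoint fsize {V : Type} (F : formula V) : nat :=
  match F with
  | FConst _ => 0
  | FLit _ _ => 1
  | FGate _ l => (fix sz l := match l with nil => 0 | G :: l' => fsize G + sz l' end) l
  end.

Fixpoint fdepth {V : Type} (F : formula V) : nat :=
  match F with
  | FConst _ => 0
  | FLit _ _ => 0
  | FGate _ l => (fix dp l := match l with nil => 0 | G :: l' => maxn (fdepth G) (dp l') end) l + 1
  end.

Fixpoint relabel {V : Type} (p : V -> V) (F : formula V) : formula V :=
  match F with
  | FConst b => FConst b
  | FLit b v => FLit b (p v)
  | FGate g l => FGate g (List.map (relabel p) l)
  end.

(* equality of labeled rooted trees with unordered children *)
Inductive tree_equiv {V : Type} : formula V -> formula V -> Prop :=
| te_const b : tree_equiv (FConst b) (FConst b)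
| te_lit b v : tree_equiv (FLit b v) (FLit b v)
| te_gate g l1 l2 l : Permutation l2 l -> Forall2 tree_equiv l1 l ->
    tree_equiv (FGate g l1) (FGate g l2).

Definition is_Sigma {V : Type} (D : nat) (F : formula V) : Prop :=
  (fdepth F <= D)%N /\ exists l, F = FGate GOr l.
Definition is_Pi {V : Type} (D : nat) (F : formula V) : Prop :=
  (fdepth F <= D)%N /\ exists l, F = FGate GAnd l.

(* Word_{S_n,k}.  Variables M_{i,a,b}: i : 'I_k (the paper's index i+1), *)
(* a, b : 'I_n (the paper's a+1, b+1).                                *)
Local Open Scope ring_scope.

Definition wvar (n k : nat) : finType := ('I_k * 'I_n * 'I_n)%type.

Definition wmat (n k : nat) (x : wvar n k -> bool) (i : 'I_k) : 'M[int]_n :=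
  \matrix_(a < n, b < n) Posz (x (i, a, b) : nat).

Definition word_domain (n k : nat) (x : wvar n k -> bool) : Prop :=
  forall i : 'I_k, is_perm_mx (wmat x i).

Definition entry11 (n : nat) : 'M[int]_n -> int :=
  match n as m return 'M[int]_m -> int with
  | 0 => fun _ => 0
  | m.+1 => fun A => A ord0 ord0
  end.

Definition wprod (n k : nat) (x : wvar n k -> bool) : 'M[int]_n :=
  \big[mulmx/1%:M]_(i < k) wmat x i.

Definition word (n k : nat) (x : wvar n k -> bool) : bool :=
  entry11 (wprod x) == 1.

Definition computes_word (n k : nat) (F : formula (wvar n k)) : Prop :=
  forall x : wvar n k -> bool, word_domain x -> eval x F = word x.

(* The action of S_n^{k-1}: g : 'I_(k-1) -> 'S_n; g_j for j = 0..k, with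
   g_0 = g_k = 1 and g_j = g (j-1) for 1 <= j <= k-1. *)
Definition gext (n k : nat) (g : 'I_k.-1 -> {perm 'I_n}) (j : nat) : {perm 'I_n} :=
  match j with
  | 0 => 1%g
  | j'.+1 => match insub j' with Some o => g o | None => 1%g end
  end.

(* (g_1..g_{k-1}) . M_{i,a,b} = M_{i, g_{i-1}(a), g_i(b)}  (paper indices) *)
Definition gact (n k : nat) (g : 'I_k.-1 -> {perm 'I_n}) (v : wvar n k) : wvar n k :=
  let: (i, a, b) := v in (i, gext g i a, gext g i.+1 b).

Definition word_invariant (n k : nat) (F : formula (wvar n k)) : Prop :=
  forall g : 'I_k.-1 -> {perm 'I_n}, tree_equiv (relabel (gact g) F) F.

(* The (1,1)-entry of M_1 ... M_k is 1 iff the walk 0 -> s_1(0) -> ... along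
   the permutations s_i of the M_i returns to 0.  Pad the walk with identity
   steps to length t^d >= k.  "The walk of length t^(e+1) from a ends at b" is
   an OR, over the n^t guesses of the t intermediate points, of an AND of t
   statements about walks of length t^e; its negation is an AND over the
   guesses ending elsewhere of an OR of negated statements.  Recursing d times
   alternates the gates and gives depth d+1 and size (t n^t)^d <= n^(2td).
   The group acts by relabelling the endpoints of every sub-walk, which just
   permutes the guesses, so the formulas are invariant.  Taking t the least
   integer with k <= t^d gives the first bound (t <= 2 k^(1/d)), and t = 2
   with d = ceil(log2 k) the second. *)

From Stdlib Require Import List Permutation Reals Lra.
From mathcomp Require Import all_boot all_order all_algebra all_fingroup.

Set Implicit Arguments.
Unset Strict Implicit.
Unset Printing Implicit Defensive.

Section RealBounds.
Local Open Scope R_scope.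

Lemma INR_expn (m e : nat) : INR (m ^ e)%N = INR m ^ e.
Proof. by elim: e => [|e IH] //=; rewrite expnS mult_INR IH. Qed.

Lemma INR_le_Rpower (m b E : nat) (y : R) :
  (0 < b)%N -> (m <= b ^ E)%N -> INR E <= y -> INR m <= Rpower (INR b) y.
Proof.
move=> b_pos /leP/le_INR m_le E_le.
have b_ge1 : 1 <= INR b by apply: (le_INR 1); apply/leP.
apply: (Rle_trans _ _ _ m_le).
rewrite INR_expn -Rpower_pow; last lra.
exact: Rle_Rpower.
Qed.

Lemma ceil_root_exponent_le (C : R) (t d k : nat) : 4 <= C -> (0 < d)%N -> (t.-1 ^ d < k)%N ->
  INR (2 * t * d) <= C * INR d * Rpower (INR k) (/ INR d).
Proof.
move=> C_ge d_pos lt_k.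
have k_ge1 : 1 <= INR k by apply: (le_INR 1); apply/leP; apply: leq_ltn_trans lt_k.
have d_gt0 : 0 < INR d by apply: (lt_INR 0); apply/ltP.
set r := Rpower (INR k) (/ INR d).
have r_ge1 : 1 <= r.
  rewrite -(Rpower_O (INR k)); last lra.
  by apply: Rle_Rpower => //; left; apply: Rinv_0_lt_compat.
have r_pow : r ^ d = INR k.
  rewrite -Rpower_pow; last lra.
  by rewrite Rpower_mult Rinv_l ?Rpower_1 //; lra.
have pred_le : INR t.-1 <= r.
  apply: Rnot_lt_le => lt_r.
  have /lt_INR : (t.-1 ^ d < k)%coq_nat by apply/ltP.
  rewrite INR_expn -r_pow.
  have : r ^ d <= INR t.-1 ^ d by apply: pow_incr; lra.
  lra.
have t_le : INR t <= 2 * r.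
  have : INR t <= INR t.-1 + 1 by case: t {lt_k pred_le} => [|t]; rewrite ?S_INR /=; lra.
  lra.
have : 0 <= (C - 4) * (r * INR d) by apply: Rmult_le_pos; nra.
rewrite !mult_INR /=; nra.
Qed.

Lemma ceil_log2_exponents_le (C : R) (d k : nat) : 16 <= C -> (1 < k)%N -> (2 ^ d.-1 < k)%N ->
  INR d.+1 <= C * ln (INR k) /\ INR (2 * 2 * d) <= C * ln (INR k).
Proof.
move=> C_ge /leP/le_INR k_ge2 /ltP/lt_INR; rewrite INR_expn => lt_k.
have {}k_ge2 : 2 <= INR k by move: k_ge2 => /=; lra.
have ln2 := ln_lt_2.
have ln_k : ln 2 <= ln (INR k).
  by case: (Req_dec (INR k) 2) => [-> | ne]; [lra | left; apply: ln_increasing; lra].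
have : INR d.-1 * ln 2 < ln (INR k).
  by rewrite -ln_pow; [apply: ln_increasing => //; apply: pow_lt|]; lra.
have : INR d <= INR d.-1 + 1 by case: d {lt_k} => [|d]; rewrite ?S_INR /=; lra.
have := pos_INR d.-1.
have : 0 <= (C - 16) * ln (INR k) by apply: Rmult_le_pos; lra.
rewrite S_INR !mult_INR /=; split; nra.
Qed.

End RealBounds.

Lemma ex_least_pred (P : pred nat) (m : nat) :
  P m -> ~~ P 0 -> exists2 m, P m & ~~ P m.-1.
Proof.
move=> Pm notP0; have ex_P : exists m, P m by exists m.
case: (ex_minnP ex_P) => {Pm}m Pm min_m; exists m => //.
case: m Pm min_m => [|m] Pm min_m; first by rewrite Pm in notP0.
by apply/negP => /min_m; rewrite ltnn.
Qed.

Lemma ceil_root_exists d k : 0 < d -> 0 < k -> exists2 t, k <= t ^ d & t.-1 ^ d < k.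
Proof.
move=> d_pos k_pos; have k_le : k <= k ^ d by rewrite -{1}(expn1 k) leq_pexp2l.
have [|t le_k] := ex_least_pred (P := fun t => k <= t ^ d) k_le; first by rewrite exp0n // -ltnNge.
by rewrite -ltnNge; exists t.
Qed.

Lemma ceil_log2_exists k : 1 < k -> exists2 d, k <= 2 ^ d & 2 ^ d.-1 < k.
Proof.
move=> k_gt1; have k_le : k <= 2 ^ k by rewrite ltnW // ltn_expl.
have [|d le_k] := ex_least_pred (P := fun d => k <= 2 ^ d) k_le; first by rewrite -ltnNge.
by rewrite -ltnNge; exists d.
Qed.

Definition quant (T : Type) (pol : bool) (p : pred T) (s : seq T) : bool :=
  if pol then has p s else all p s.

Lemma eq_quant (T : Type) pol (p1 p2 : pred T) : p1 =1 p2 -> quant pol p1 =1 quant pol p2.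
Proof. by move=> eq_p s; case: pol; [apply: eq_has | apply: eq_all]. Qed.

Lemma quant_map (T U : Type) pol (p : pred U) (f : T -> U) s :
  quant pol p (map f s) = quant pol (fun y => p (f y)) s.
Proof. by case: pol; rewrite /quant (has_map, all_map). Qed.

Lemma quant_flatten (T : Type) pol (p : pred T) ss :
  quant pol p (flatten ss) = quant pol (quant pol p) ss.
Proof. by case: pol; elim: ss => //= s ss IH; rewrite /quant (has_cat, all_cat) -IH. Qed.

Lemma quant_negb_eq (T : Type) pol (p : pred T) s :
  quant (~~ pol) (fun y => p y == pol) s = (all p s == pol).
Proof.
case: pol; rewrite /quant /=.
  by rewrite eqb_id; apply: eq_all => y; rewrite eqb_id.
by rewrite eqbF_neg -has_predC; apply: eq_has => y; rewrite eqbF_neg.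
Qed.

Lemma quant_filter_unique (T : finType) pol (P : pred T) (c0 : T) :
  quant pol (fun c => (c == c0) == pol) [seq c <- enum T | P c == pol] = P c0.
Proof.
case: pol; rewrite /quant.
  rewrite (eq_has (a2 := pred1 c0)) => [|c]; last by rewrite eqb_id.
  by rewrite has_pred1 mem_filter mem_enum eqb_id; case: (P c0).
rewrite (eq_all (a2 := predC (pred1 c0))) => [|c]; last by rewrite eqbF_neg.
by rewrite all_predC has_pred1 mem_filter mem_enum eqbF_neg; case: (P c0).
Qed.

Lemma Permutation_perm_eq (T : eqType) (s1 s2 : seq T) : perm_eq s1 s2 -> Permutation s1 s2.
Proof.
elim: s1 s2 => [|x s1 IH] s2; first by rewrite perm_sym => /perm_nilP ->.
move=> eq_s; have x_s2 : x \in s2 by rewrite -(perm_mem eq_s) mem_head.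
move: eq_s; case/splitPr: x_s2 => s3 s4 eq_s; apply: Permutation_cons_app; apply: IH.
rewrite -(perm_cons x); apply: (perm_trans eq_s).
by rewrite -cat1s perm_catCA.
Qed.

Lemma perm_map_enum (T : finType) (h : T -> T) : injective h -> perm_eq (map h (enum T)) (enum T).
Proof.
move=> h_inj; have [h' hK h'K] := injF_bij h_inj.
apply: uniq_perm; [by rewrite map_inj_uniq // enum_uniq | exact: enum_uniq | move=> c].
by rewrite mem_enum; apply/mapP; exists (h' c); rewrite ?mem_enum ?h'K.
Qed.

Lemma List_mapE (T U : Type) (f : T -> U) (s : seq T) : List.map f s = map f s.
Proof. by elim: s => //= y s ->. Qed.

Lemma sumn_map_le (T : Type) (f : T -> nat) (B : nat) (s : seq T) :
  (forall y, f y <= B) -> sumn (map f s) <= size s * B.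
Proof. by move=> f_le; elim: s => //= y s IH; rewrite mulSn leq_add. Qed.

Section Formulas.
Variable V : Type.
Implicit Types (x : V -> bool) (F : formula V) (L : seq (formula V)).

Definition pgate (pol : bool) : gate := if pol then GOr else GAnd.

Lemma eval_pgate x pol L : eval x (FGate (pgate pol) L) = quant pol (eval x) L.
Proof. by case: pol; elim: L => //= F L ->. Qed.

Lemma fsize_gate g L : fsize (FGate g L) = sumn (map fsize L).
Proof. by elim: L => //= F L ->. Qed.

Lemma fdepth_gate_le g L D : all (fun F => fdepth F <= D) L -> fdepth (FGate g L) <= D.+1.
Proof.
elim: L => //= F L IH /andP[F_le /IH]; rewrite /= !addn1 !ltnS => L_le.
by rewrite geq_max F_le.
Qed.

Lemma relabel_gate (p : V -> V) g L : relabel p (FGate g L) = FGate g (map (relabel p) L).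
Proof. by rewrite /= List_mapE. Qed.

Definition equiv_children L1 L2 := exists L, Permutation L2 L /\ Forall2 tree_equiv L1 L.

Lemma tree_equiv_gate g L1 L2 : equiv_children L1 L2 -> tree_equiv (FGate g L1) (FGate g L2).
Proof. by move=> [L [perm_L eq_L]]; apply: te_gate perm_L eq_L. Qed.

Lemma equiv_children1 F1 F2 : tree_equiv F1 F2 -> equiv_children [:: F1] [:: F2].
Proof. by exists [:: F2]; split; constructor. Qed.

Lemma equiv_children_flatten (I : eqType) (F G : I -> seq (formula V)) (s : seq I) :
  {in s, forall j, equiv_children (F j) (G j)} ->
  equiv_children (flatten (map F s)) (flatten (map G s)).
Proof.
elim: s => [|j s IH] eq_FG /=; first by exists [::]; split; constructor.
have [L1 [perm1 eq1]] := eq_FG j (mem_head j s).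
have [L2 [perm2 eq2]] := IH (fun i si => eq_FG i (mem_behead (s := j :: s) si)).
by exists (L1 ++ L2); split; [apply: Permutation_app | apply: Forall2_app].
Qed.

Lemma equiv_children_map_perm (T : eqType) (F G : T -> formula V) (h : T -> T) (s1 s2 : seq T) :
  perm_eq (map h s1) s2 -> (forall c, tree_equiv (F c) (G (h c))) ->
  equiv_children (map F s1) (map G s2).
Proof.
move=> perm_s FG; exists (map (G \o h) s1); split.
  rewrite map_comp -!List_mapE; apply: Permutation_map; apply: Permutation_perm_eq.
  by rewrite perm_sym.
by elim: s1 {perm_s} => //= c s1 IH; constructor.
Qed.

End Formulas.

Section Walks.
Variables (T : eqType) (f : nat -> T -> T).

Definition walk (lo len : nat) (a : T) : T := foldl (fun b i => f i b) a (iota lo len).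

Lemma walkD lo m1 m2 a : walk lo (m1 + m2) a = walk (lo + m1) m2 (walk lo m1 a).
Proof. by rewrite /walk iotaD foldl_cat. Qed.

Lemma walk_pad K L a : (forall i b, K <= i -> f i b = b) -> K <= L -> walk 0 L a = walk 0 K a.
Proof.
move=> f_id le_KL; rewrite -(subnKC le_KL) walkD add0n.
elim: (L - K) {le_KL} (walk 0 K a) => [|len IH] b //.
by rewrite -addn1 walkD IH /walk /= f_id ?leq_addr.
Qed.

Definition chain (lo q : nat) (a : T) (c : seq T) : bool :=
  all (fun j => walk (lo + j * q) q (nth a (a :: c) j) == nth a (a :: c) j.+1) (iota 0 (size c)).

Lemma nth_walk_points lo q a m j :
  j <= m -> nth a (a :: mkseq (fun i => walk lo (i.+1 * q) a) m) j = walk lo (j * q) a.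
Proof. by case: j => [|j] lt_jm //=; rewrite nth_mkseq. Qed.

Lemma chainE lo q a c :
  chain lo q a c = (c == mkseq (fun j => walk lo (j.+1 * q) a) (size c)).
Proof.
apply/allP/eqP => [chain_c | ->] /=.
  have block j : j < size c -> walk (lo + j * q) q (nth a (a :: c) j) = nth a c j.
    by move=> lt_j; apply/eqP/chain_c; rewrite mem_iota.
  apply: (eq_from_nth (x0 := a)); rewrite ?size_mkseq // => j lt_j.
  rewrite nth_mkseq //; elim: j lt_j => [|j IH] lt_j.
    by rewrite -block // /= mul0n addn0 mul1n.
  by rewrite -block // /= IH ?(ltnW lt_j) // -walkD -mulSnr.
move=> j; rewrite size_mkseq mem_iota add0n => /andP[_ lt_j].
by rewrite nth_walk_points ?(ltnW lt_j) // nth_mkseq // -walkD -mulSnr.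
Qed.

End Walks.

Lemma perm_prod_foldl (T : finType) (I : Type) (r : seq I) (F : I -> {perm T}) (a : T) :
  (\prod_(i <- r) F i)%g a = foldl (fun b i => F i b) a r.
Proof. by elim: r a => [|i r IH] a; rewrite ?big_nil ?perm1 // big_cons permM IH. Qed.

Section WordSemantics.
Variables n k : nat.
Implicit Type x : wvar n k -> bool.

Definition mx_perm x (i : 'I_k) : {perm 'I_n} := odflt 1%g [pick s | wmat x i == perm_mx s].

Definition step x (j : nat) : {perm 'I_n} := if insub j is Some i then mx_perm x i else 1%g.

Lemma step_out x j : k <= j -> step x j = 1%g.
Proof. by move=> le_kj; rewrite /step insubN // -leqNgt. Qed.

Lemma wmat_mx_perm x i : word_domain x -> wmat x i = perm_mx (mx_perm x i).
Proof.
move=> /(_ i) /existsP[s /eqP wmat_s]; rewrite /mx_perm.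
by case: pickP => [s' /eqP // | /(_ s)]; rewrite wmat_s eqxx.
Qed.

Lemma wvar_step x (i : 'I_k) a b : word_domain x -> x (i, a, b) = (step x i a == b).
Proof.
move=> x_dom; have := congr1 (fun M : 'M[int]_n => M a b) (wmat_mx_perm i x_dom).
by rewrite /step valK !mxE; case: (x _); case: (_ == b).
Qed.

Lemma wprod_perm x : word_domain x -> wprod x = perm_mx (\prod_(0 <= j < k) step x j)%g.
Proof.
move=> x_dom; rewrite /wprod (big_morph _ (@perm_mxM _ n) (perm_mx1 _ n)) big_mkord.
by apply: eq_bigr => i _; rewrite wmat_mx_perm // /step valK.
Qed.

End WordSemantics.

Lemma word_walk n' k (x : wvar n'.+1 k -> bool) :
  word_domain x -> word x = (walk (step x) 0 k ord0 == ord0).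
Proof.
move=> /wprod_perm; rewrite /word => ->; rewrite /= !mxE perm_prod_foldl /index_iota subn0.
by case: (_ == ord0).
Qed.

Lemma gext_out n k (g : 'I_k.-1 -> {perm 'I_n}) j : k <= j -> gext g j = 1%g.
Proof. by case: j => [|j] //= le_kj; rewrite insubN // -leqNgt -subn1 leq_subLR add1n. Qed.

Section WalkFormulas.
Variables n k t : nat.
Local Notation form := (formula (wvar n k)).

(* Steps [lo >= k] are the identity steps padding the walk, so their leaves are constants. *)
Definition leaf (lo : nat) (a b : 'I_n) (s : bool) : form :=
  if insub lo is Some i then FLit s (i, a, b) else FConst ((a == b) == s).

(* [c] guesses the points reached after each of the [t] blocks of [t ^ e'] steps. *)
Fixpoint walk_children (e : nat) (pol : bool) (lo : nat) (a b : 'I_n) (s : bool) : seq form :=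
  if e is e'.+1 then
    [seq FGate (pgate (~~ pol))
         (flatten [seq walk_children e' (~~ pol) (lo + j * t ^ e')
                       (nth a (a :: c) j) (nth a (a :: c) j.+1) pol | j <- iota 0 t])
    | c : t.-tuple 'I_n <- enum {:t.-tuple 'I_n} & ((last a c == b) == s) == pol]
  else [:: leaf lo a b s].

Lemma walk_children_depth e pol lo a b s :
  all (fun F => fdepth F <= e) (walk_children e pol lo a b s).
Proof.
elim: e pol lo a b s => [|e IH] pol lo a b s /=; first by rewrite /leaf; case: insub.
rewrite all_map; apply/allP => c _; apply: fdepth_gate_le.
rewrite -[all _ _]/(quant false _ _) quant_flatten quant_map.
by apply/allP => j _; exact: IH.
Qed.

Lemma walk_children_size e pol lo a b s :
  sumn (map fsize (walk_children e pol lo a b s)) <= (t * n ^ t) ^ e.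
Proof.
elim: e pol lo a b s => [|e IH] pol lo a b s /=; first by rewrite /leaf; case: insub.
rewrite -map_comp (leq_trans (sumn_map_le _ (B := t * (t * n ^ t) ^ e) _)) //.
  move=> c; rewrite [(_ \o _) c]/comp fsize_gate map_flatten sumn_flatten -!map_comp.
  by rewrite -[t in t * _](size_iota 0 t); apply: sumn_map_le => j; exact: IH.
rewrite expnS mulnCA mulnA; apply: leq_mul => //; apply: leq_mul => //.
by rewrite size_filter (leq_trans (count_size _ _)) // -cardE card_tuple card_ord.
Qed.


Section Evaluation.
Variables (x : wvar n k -> bool) (f : nat -> 'I_n -> 'I_n).
Hypothesis eval_leaf : forall lo a b s, eval x (leaf lo a b s) = ((f lo a == b) == s).

Lemma eval_walk_children e pol lo a b s :
  eval x (FGate (pgate pol) (walk_children e pol lo a b s)) = ((walk f lo (t ^ e) a == b) == s).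
Proof.
elim: e pol lo a b s => [|e IH] pol lo a b s.
  by rewrite eval_pgate; case: pol; rewrite /quant (has_seq1, all_seq1) eval_leaf.
set q := t ^ e; pose c0 := [tuple of mkseq (fun j => walk f lo (j.+1 * q) a) t].
have eval_child (c : t.-tuple 'I_n) :
    eval x (FGate (pgate (~~ pol)) (flatten [seq walk_children e (~~ pol) (lo + j * q)
              (nth a (a :: c) j) (nth a (a :: c) j.+1) pol | j <- iota 0 t]))
    = ((c == c0) == pol).
  rewrite eval_pgate quant_flatten quant_map (eq_quant _ (fun j => esym (eval_pgate _ _ _))).
  rewrite (eq_quant _ (fun j => IH _ _ _ _ _)) quant_negb_eq -/q.
  have -> : iota 0 t = iota 0 (size c) by rewrite size_tuple.
  by rewrite -[all _ _]/(chain f lo q a c) chainE size_tuple.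
rewrite eval_pgate quant_map (eq_quant _ eval_child) quant_filter_unique.
by rewrite (last_nth a) size_tuple nth_walk_points // -expnS.
Qed.

End Evaluation.

Lemma tree_equiv_leaf lo a b s : tree_equiv (leaf lo a b s) (leaf lo a b s).
Proof. by rewrite /leaf; case: insub => [i|]; constructor. Qed.

Section Invariance.
Variable g : 'I_k.-1 -> {perm 'I_n}.

Lemma relabel_leaf lo a b s :
  relabel (gact g) (leaf lo a b s) = leaf lo (gext g lo a) (gext g lo.+1 b) s.
Proof.
rewrite /leaf; case: insubP => [i _ <- //|]; rewrite -leqNgt => le_k_lo.
by rewrite !gext_out ?(leqW le_k_lo) ?perm1.
Qed.

Lemma relabel_walk_children e pol lo a b s :
  equiv_children (map (relabel (gact g)) (walk_children e pol lo a b s))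
                 (walk_children e pol lo (gext g lo a) (gext g (lo + t ^ e) b) s).
Proof.
elim: e pol lo a b s => [|e IH] pol lo a b s.
  by rewrite /= relabel_leaf addn1; apply/equiv_children1/tree_equiv_leaf.
set q := t ^ e; set a' := gext g lo a.
pose h (c : t.-tuple 'I_n) : t.-tuple 'I_n :=
  [tuple of mkseq (fun j => gext g (lo + j.+1 * q) (nth a c j)) t].
have h_points c j : j <= t -> nth a' (a' :: h c) j = gext g (lo + j * q) (nth a (a :: c) j).
  by case: j => [|j] lt_jt /=; rewrite ?mul0n ?addn0 // nth_mkseq.
have h_inj : injective h.
  move=> c1 c2 /(congr1 val) /= eq_h; apply: val_inj; apply: (eq_from_nth (x0 := a)) => [|j].
    by rewrite !size_tuple.
  rewrite size_tuple => lt_jt; apply: (@perm_inj _ (gext g (lo + j.+1 * q))).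
  by move/(congr1 (nth a' ^~ j)): eq_h; rewrite !nth_mkseq.
rewrite -map_comp; apply: (equiv_children_map_perm (h := h)).
  apply: (perm_trans _ (perm_filter _ (perm_map_enum h_inj))).
  rewrite [X in perm_eq _ X]filter_map.
  rewrite (@eq_filter _ (preim h _) (fun c => ((last a c == b) == s) == pol)) => [|c /=].
    exact: perm_refl.
  rewrite (last_nth a') size_tuple h_points // (last_nth a) size_tuple.
  by rewrite expnS (inj_eq perm_inj).
move=> c; rewrite [(_ \o _) c]/comp relabel_gate; apply: tree_equiv_gate.
rewrite map_flatten -map_comp; apply: equiv_children_flatten => j.
rewrite mem_iota add0n => /andP[_ lt_jt].
rewrite [(_ \o _) j]/comp !h_points ?(ltnW lt_jt) // mulSnr addnA.
exact: IH.
Qed.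

End Invariance.

End WalkFormulas.

Lemma eval_leaf_step n k (x : wvar n k -> bool) lo a b s :
  word_domain x -> eval x (leaf k lo a b s) = ((step x lo a == b) == s).
Proof.
move=> x_dom; rewrite /leaf; case: insubP => [i _ <- | /negbTE out].
  by case: s; rewrite /= -wvar_step ?eqb_id ?eqbF_neg.
by rewrite step_out ?perm1 // leqNgt out.
Qed.

Lemma leaf_word_formula n' k : k <= 1 ->
  let F := leaf k 0 (ord0 : 'I_n'.+1) ord0 true in
  [/\ computes_word F, word_invariant F, fdepth F = 0 & fsize F <= 1].
Proof.
move=> le_k1 F; split; rewrite /F.
- move=> x x_dom; rewrite eval_leaf_step // eqb_id word_walk // -(walk_pad (L := 1)) //.
  by move=> i b /step_out ->; rewrite perm1.
- by move=> g; rewrite relabel_leaf [gext g 0]/= (gext_out g le_k1) !perm1; apply: tree_equiv_leaf.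
- by rewrite /leaf; case: insub.
- by rewrite /leaf; case: insub.
Qed.

Lemma word_formula_exists n k t d (pol : bool) : 0 < n -> k <= t ^ d ->
  exists L : seq (formula (wvar n k)),
    [/\ computes_word (FGate (pgate pol) L), word_invariant (FGate (pgate pol) L),
        fdepth (FGate (pgate pol) L) <= d.+1 & fsize (FGate (pgate pol) L) <= n ^ (2 * t * d)].
Proof.
case: n => [|[|n']] // _ le_k.
  exists [:: FConst true]; split=> //.
    by move=> x x_dom; rewrite word_walk // (ord1 (walk _ _ _ _)) eqxx; case: pol.
  by move=> g; rewrite relabel_gate; apply/tree_equiv_gate/equiv_children1; constructor.
exists (walk_children k t d pol 0 ord0 ord0 true); split.
- move=> x x_dom; rewrite (@eval_walk_children _ _ t x (fun j => step x j)) => [|lo a b s].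
    rewrite eqb_id word_walk // (walk_pad (K := k)) //.
    by move=> i b /step_out ->; rewrite perm1.
  exact: eval_leaf_step.
- move=> g; rewrite relabel_gate; apply: tree_equiv_gate.
  have := relabel_walk_children t g d pol 0 ord0 ord0 true.
  by rewrite add0n [gext g 0]/= (gext_out g le_k) !perm1.
- exact/fdepth_gate_le/walk_children_depth.
rewrite fsize_gate (leq_trans (walk_children_size _ _ _ _ _ _ _ _)) // expnM.
case: d {le_k} => [//|d]; rewrite leq_exp2r // mul2n -addnn expnD leq_mul2r.
by rewrite ltnW ?orbT // ltn_expl.
Qed.

Theorem corollary3p2 :
  exists C : Reals.Rdefinitions.R,
    (forall n k d : nat, (1 <= n)%N -> (1 <= k)%N -> (1 <= d)%N ->
      exists F1 F2 : formula (wvar n k),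
        [/\ is_Sigma d.+1 F1, is_Pi d.+1 F2,
            computes_word F1 /\ computes_word F2,
            word_invariant F1 /\ word_invariant F2 &
            let bound := Reals.Rpower.Rpower (Reals.Raxioms.INR n)
                 (Reals.Rdefinitions.Rmult (Reals.Rdefinitions.Rmult C (Reals.Raxioms.INR d))
                    (Reals.Rpower.Rpower (Reals.Raxioms.INR k)
                       (Reals.Rdefinitions.Rinv (Reals.Raxioms.INR d)))) in
            Reals.Rdefinitions.Rle (Reals.Raxioms.INR (fsize F1)) bound /\
            Reals.Rdefinitions.Rle (Reals.Raxioms.INR (fsize F2)) bound])
    /\
    (forall n k : nat, (1 <= n)%N -> (1 <= k)%N ->
      exists F : formula (wvar n k),
        [/\ computes_word F, word_invariant F,
            Reals.Rdefinitions.Rle (Reals.Raxioms.INR (fdepth F))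
              (Reals.Rdefinitions.Rmult C (Reals.Rpower.ln (Reals.Raxioms.INR k))) &
            Reals.Rdefinitions.Rle (Reals.Raxioms.INR (fsize F))
              (Reals.Rpower.Rpower (Reals.Raxioms.INR n)
                 (Reals.Rdefinitions.Rmult C (Reals.Rpower.ln (Reals.Raxioms.INR k))))]).
Proof.
exists (16 : R); split.
  move=> n k d n_pos k_pos d_pos; have [t le_k lt_k] := ceil_root_exists d_pos k_pos.
  have [L1 [comp1 inv1 depth1 size1]] := word_formula_exists true n_pos le_k.
  have [L2 [comp2 inv2 depth2 size2]] := word_formula_exists false n_pos le_k.
  exists (FGate GOr L1), (FGate GAnd L2); split=> //.
  - by split=> //; exists L1.
  - by split=> //; exists L2.
  by split; apply: INR_le_Rpower (ceil_root_exponent_le _ d_pos lt_k) => //; lra.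
move=> n k n_pos; case: k => [|[|k']] // _.
  case: n n_pos => [|n'] // n_pos.
  have [comp inv depth size] := @leaf_word_formula n' 1 (leqnn 1).
  exists (leaf 1 0 ord0 ord0 true); split=> //; rewrite ln_1 Rmult_0_r.
    by rewrite depth /=; lra.
  by apply: (INR_le_Rpower (E := 0)) n_pos size _; rewrite /=; lra.
have k_gt1 : 1 < k'.+2 by [].
have [d le_k lt_k] := ceil_log2_exists k_gt1.
have [L [comp inv depth size]] := word_formula_exists true n_pos le_k.
have [depth_le size_le] := ceil_log2_exponents_le (Rle_refl 16) k_gt1 lt_k.
exists (FGate GOr L); split=> //; last exact: INR_le_Rpower size size_le.
by apply: Rle_trans depth_le; apply/le_INR/leP.
Qed.
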